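(* Consider fair division instances with $n$ agents, $m$ divisible goods, additive valuations and generalized assignment constraints (constraints publicly known, valuations reported). Consider the mechanism: set $\mathcal{P}=\emptyset$; for $i=1,\dots,n$, let $q_i$ be the optimal value of the linear program in variables $\{x_{j,g}\}_{j\le i,g\in[m]}$ maximizing $v_i(x_i)$ subject to $x_{j,g}\ge0$, $\sum_{j\le i}x_{j,g}\le1$ for all $g$, $x_j$ feasible for $j$ for all $j\le i$, and all constraints in $\mathcal{P}$; then add the constraint $v_i(x_i)=q_i$ to $\mathcal{P}$. Finally output any $x=(x_1,\dots,x_n)$ with $x_{j,g}\ge0$, $\sum_{j}x_{j,g}\le1$, $x_j$ feasible for $j$ for all $j$, and satisfying all constraints in $\mathcal{P}$. This mechanism is truthful and always outputs a Pareto-optimal allocation.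
   Context: Additive valuations: $v_i(y)=\sum_g y_g v_{i,g}$, $v_{i,g}\ge0$, where $v_i$ is agent $i$'s reported valuation. Generalized assignment constraints: agent $i$ has sizes $s_i(g)\ge0$ and budget $B_i$; bundle $y$ is feasible for $i$ iff $\sum_g s_i(g)y_g\le B_i$. A feasible allocation $x$ is Pareto-optimal if no feasible allocation $z$ has $v_i(z_i)\ge v_i(x_i)$ for all $i$ with some inequality strict. A mechanism maps reported valuation profiles to feasible allocations; it is truthful if no agent can obtain a bundle of strictly higher true value by misreporting her valuation, for any reports of the other agents. *)

From mathcomp Require Import all_boot all_order all_algebra.
Set Implicit Arguments. Unset Strict Implicit. Unset Printing Implicit Defensive.
Import Order.TTheory GRing.Theory Num.Theory.
Local Open Scope ring_scope.

Section FairDivision.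
Variables (R : realFieldType) (n m : nat).

Definition profile := 'I_n -> 'I_m -> R.
Definition allocation := 'I_n -> 'I_m -> R.

Definition val (vi : 'I_m -> R) (y : 'I_m -> R) : R := \sum_(g < m) y g * vi g.

Definition valid_valuation (vi : 'I_m -> R) : Prop := forall g, 0 <= vi g.
Definition valid_profile (v : profile) : Prop := forall i, valid_valuation (v i).

(* generalized assignment constraint of agent j: sum_g s_j(g) y_g <= B_j *)
Definition bundle_feasible (s : 'I_n -> 'I_m -> R) (B : 'I_n -> R) (j : 'I_n)
  (y : 'I_m -> R) : Prop := \sum_(g < m) s j g * y g <= B j.

Definition feasible_alloc (s : 'I_n -> 'I_m -> R) (B : 'I_n -> R)
  (x : allocation) : Prop :=
  [/\ forall j g, 0 <= x j g,
      forall g, \sum_(j < n) x j g <= 1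
    & forall j, bundle_feasible s B j (x j)].

Definition pareto_optimal (s : 'I_n -> 'I_m -> R) (B : 'I_n -> R)
  (v : profile) (x : allocation) : Prop :=
  feasible_alloc s B x /\
  ~ (exists z : allocation, feasible_alloc s B z /\
       (forall i, val (v i) (x i) <= val (v i) (z i)) /\
       (exists i, val (v i) (x i) < val (v i) (z i))).

(* Feasible region of the i-th LP: variables x_{j,g} for j <= i (the entries
   of y for agents j > i are ignored), constraints x_{j,g} >= 0,
   sum_{j<=i} x_{j,g} <= 1, x_j feasible for j, and the constraints of P,
   i.e. v_j(x_j) = q_j for all j < i. *)
Definition LP_region (s : 'I_n -> 'I_m -> R) (B : 'I_n -> R) (v : profile)
  (q : 'I_n -> R) (i : 'I_n) (y : allocation) : Prop :=
  [/\ forall (j : 'I_n) g, (j <= i)%N -> 0 <= y j g,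
      forall g, \sum_(j < n | (j <= i)%N) y j g <= 1,
      forall j : 'I_n, (j <= i)%N -> bundle_feasible s B j (y j)
    & forall j : 'I_n, (j < i)%N -> val (v j) (y j) = q j].

Definition LP_values (s : 'I_n -> 'I_m -> R) (B : 'I_n -> R) (v : profile)
  (q : 'I_n -> R) : Prop :=
  forall i : 'I_n,
    (exists y, LP_region s B v q i y /\ val (v i) (y i) = q i) /\
    (forall y, LP_region s B v q i y -> val (v i) (y i) <= q i).

Definition mechanism_output (s : 'I_n -> 'I_m -> R) (B : 'I_n -> R)
  (v : profile) (x : allocation) : Prop :=
  exists q, LP_values s B v q /\ feasible_alloc s B x /\
            (forall j, val (v j) (x j) = q j).

Definition update (v : profile) (i : 'I_n) (w : 'I_m -> R) : profile :=
  fun j => if j == i then w else v j.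

Definition truthful (M : profile -> allocation) : Prop :=
  forall (v : profile) (i : 'I_n) (w : 'I_m -> R),
    valid_profile v -> valid_valuation w ->
    val (v i) (M (update v i w) i) <= val (v i) (M v i).

End FairDivision.

From Pilot Require Import Defs.
From mathcomp Require Import all_boot all_order all_algebra.
Set Implicit Arguments. Unset Strict Implicit. Unset Printing Implicit Defensive.
Import Order.TTheory GRing.Theory Num.Theory.
Local Open Scope ring_scope.

(* The mechanism maximises the agents' values lexicographically in the order
   1, ..., n.  The i-th LP only involves the reports of agents 1, ..., i, so
   q_1, ..., q_{i-1} do not depend on agent i's report, and the output of any
   report of agent i lies in the i-th LP region of the truthful run: its value
   for agent i is at most q_i.  Likewise, an allocation weakly dominating the
   output is, by induction on j, in the j-th LP region with value at least
   q_j, hence exactly q_j: nobody strictly gains, which is Pareto optimality. *)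

Lemma ord_ltn_ind (k : nat) (P : 'I_k -> Prop) :
  (forall j : 'I_k, (forall l : 'I_k, (l < j)%N -> P l) -> P j) ->
  forall j, P j.
Proof.
move=> IH j; have [N] := ubnP j; elim: N j => // N IHN j ltjN.
by apply: IH => l ltlj; apply: IHN; apply: leq_trans ltlj _.
Qed.

Lemma valid_profile_update (R : realFieldType) (n m : nat)
    (v : profile R n m) (i : 'I_n) (w : 'I_m -> R) :
  valid_profile v -> valid_valuation w -> valid_profile (update v i w).
Proof. by move=> hv hw j; rewrite /update; case: (j == i). Qed.

Lemma update_lt (R : realFieldType) (n m : nat)
    (v : profile R n m) (i : 'I_n) (w : 'I_m -> R) (j : 'I_n) :
  (j < i)%N -> update v i w j = v j.
Proof. by rewrite /update; case: eqP => // -> /[!ltnn]. Qed.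

Section LexicographicLP.
Variables (R : realFieldType) (n m : nat).
Variables (s : 'I_n -> 'I_m -> R) (B : 'I_n -> R).

Lemma feasible_LP_region (v : profile R n m) (q : 'I_n -> R) (i : 'I_n)
    (z : allocation R n m) :
  feasible_alloc s B z ->
  (forall j : 'I_n, (j < i)%N -> Defs.val (v j) (z j) = q j) ->
  LP_region s B v q i z.
Proof.
case=> z_ge0 z_le1 z_bundle zq; split=> // g; apply: le_trans (z_le1 g).
rewrite [leRHS](bigID (fun j : 'I_n => (j <= i)%N)) /= lerDl.
by apply: sumr_ge0 => j _; apply: z_ge0.
Qed.

Lemma LP_region_prefix (v v' : profile R n m) (q q' : 'I_n -> R) (i : 'I_n)
    (y : allocation R n m) :
  (forall j : 'I_n, (j < i)%N -> v' j = v j) ->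
  (forall j : 'I_n, (j < i)%N -> q' j = q j) ->
  LP_region s B v' q' i y -> LP_region s B v q i y.
Proof.
move=> vv' qq' [y_ge0 y_le1 y_bundle yq]; split=> // j ltji.
by rewrite -vv' // -qq' // yq.
Qed.

Lemma LP_value_le_prefix (v v' : profile R n m) (q q' : 'I_n -> R)
    (i : 'I_n) :
  LP_values s B v q -> LP_values s B v' q' ->
  (forall j : 'I_n, (j <= i)%N -> v' j = v j) ->
  (forall j : 'I_n, (j < i)%N -> q' j = q j) ->
  q' i <= q i.
Proof.
move=> hq hq' vv' qq'.
have [[y [y_reg <-]] _] := hq' i.
rewrite vv' //; apply: (proj2 (hq i)); apply: LP_region_prefix y_reg => //.
by move=> j /ltnW; apply: vv'.
Qed.

Lemma LP_values_prefix (v v' : profile R n m) (q q' : 'I_n -> R) (i : 'I_n) :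
  LP_values s B v q -> LP_values s B v' q' ->
  (forall j : 'I_n, (j < i)%N -> v' j = v j) ->
  forall j : 'I_n, (j < i)%N -> q' j = q j.
Proof.
move=> hq hq' vv'; elim/ord_ltn_ind => j IH ltji.
have vv'j (k : 'I_n) : (k <= j)%N -> v' k = v k.
  by move=> lekj; apply: vv'; apply: leq_ltn_trans ltji.
have qq'j (k : 'I_n) : (k < j)%N -> q' k = q k.
  by move=> ltkj; apply: IH ltkj (ltn_trans ltkj ltji).
apply/eqP; rewrite eq_le; apply/andP; split.
- exact: (LP_value_le_prefix hq hq').
- apply: (LP_value_le_prefix hq' hq) => k hk; [exact/esym/vv'j | exact/esym/qq'j].
Qed.

Lemma LP_values_eq_of_le (v : profile R n m) (q : 'I_n -> R)
    (z : allocation R n m) :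
  LP_values s B v q -> feasible_alloc s B z ->
  (forall j, q j <= Defs.val (v j) (z j)) ->
  forall j, Defs.val (v j) (z j) = q j.
Proof.
move=> hq hz q_le; elim/ord_ltn_ind => j IH.
apply/eqP; rewrite eq_le q_le andbT.
by apply: (proj2 (hq j)); apply: feasible_LP_region.
Qed.

Lemma mechanism_output_pareto (v : profile R n m) (x : allocation R n m) :
  mechanism_output s B v x -> pareto_optimal s B v x.
Proof.
case=> q [hq [hx xq]]; split=> // -[z [hz [x_le_z [i lt_xz]]]].
have q_le j : q j <= Defs.val (v j) (z j) by rewrite -xq.
by move: lt_xz; rewrite xq (LP_values_eq_of_le hq hz q_le) ltxx.
Qed.

Lemma mechanism_output_no_gain (v : profile R n m) (i : 'I_n)
    (w : 'I_m -> R) (x x' : allocation R n m) :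
  mechanism_output s B v x -> mechanism_output s B (update v i w) x' ->
  Defs.val (v i) (x' i) <= Defs.val (v i) (x i).
Proof.
case=> q [hq [_ xq]] [q' [hq' [hx' x'q']]].
have qq' := LP_values_prefix hq hq' (update_lt v w).
rewrite xq; apply: (proj2 (hq i)); apply: feasible_LP_region => // j ltji.
by rewrite -(update_lt v w ltji) x'q' qq'.
Qed.

End LexicographicLP.

Theorem theorem6 (R : realFieldType) (n m : nat)
  (s : 'I_n -> 'I_m -> R) (B : 'I_n -> R)
  (hs : forall i g, 0 <= s i g)
  (M : profile R n m -> allocation R n m)
  (hM : forall v : profile R n m, valid_profile v ->
          mechanism_output s B v (M v)) :
  truthful M /\
  (forall v : profile R n m, valid_profile v -> pareto_optimal s B v (M v)).
Proof.
split.
- move=> v i w hv hw; apply: (mechanism_output_no_gain (hM v hv)).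
  exact/hM/valid_profile_update.
- by move=> v hv; apply: mechanism_output_pareto; apply: hM.
Qed.
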